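(* Every coherent strongly Kripke complete normal modal logic is weakly transitive.
   Context: For a normal modal logic $\mathsf{L}$, let $\mathcal{V}_\mathsf{L}$ be the variety of modal algebras that is its equivalent algebraic semantics (consequence is global consequence). $\mathsf{L}$ is called coherent if $\mathcal{V}_\mathsf{L}$ is coherent, i.e., every finitely generated subalgebra of a finitely presented member of $\mathcal{V}_\mathsf{L}$ is finitely presented in $\mathcal{V}_\mathsf{L}$. $\mathsf{L}$ is strongly Kripke complete if for every set of formulas $\Gamma\cup\{\varphi\}$ with $\Gamma\not\vdash_\mathsf{L}\varphi$ there is a Kripke frame $\mathfrak{F}$ for $\mathsf{L}$ and a valuation $v$ with $\mathfrak{F}\models_v\Gamma$ and $\mathfrak{F}\not\models_v\varphi$. With $\boxdot x := x\wedge\Box x$, $\mathsf{L}$ is $n$-transitive if $\vdash_\mathsf{L}\boxdot^n x\to\boxdot^{n+1}x$, and weakly transitive if it is $n$-transitive for some $n\in\mathbb{N}$. *)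

(* Boolean algebras are MathComp's ctbDistrLatticeType. *)
From HB Require Import structures.
From mathcomp Require Import all_boot all_order.
From Stdlib Require List.
Set Implicit Arguments.
Unset Strict Implicit.
Unset Printing Implicit Defensive.

Inductive form : Type :=
| Var : nat -> form
| Bot : form
| Imp : form -> form -> form
| Box : form -> form.

Definition Neg (a : form) : form := Imp a Bot.
Definition Top : form := Neg Bot.
Definition And (a b : form) : form := Neg (Imp a (Neg b)).
Definition Or (a b : form) : form := Imp (Neg a) b.

Definition Boxdot (a : form) : form := And a (Box a).
Fixpoint Boxdot_n (n : nat) (a : form) : form :=
  match n with 0 => a | S k => Boxdot (Boxdot_n k a) end.

Fixpoint subst (s : nat -> form) (a : form) : form :=
  match a with
  | Var n => s n
  | Bot => Bot
  | Imp a b => Imp (subst s a) (subst s b)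
  | Box a => Box (subst s a)
  end.

Fixpoint vars_lt (n : nat) (a : form) : bool :=
  match a with
  | Var k => (k < n)%N
  | Bot => true
  | Imp a b => vars_lt n a && vars_lt n b
  | Box a => vars_lt n a
  end.

(** propositional tautologies of the modal language: formulas true under every
    classical valuation in which variables and boxed subformulas are atoms
    (= substitution instances of classical tautologies) *)
Fixpoint beval (v : form -> bool) (a : form) : bool :=
  match a with
  | Var n => v (Var n)
  | Bot => false
  | Imp a b => ~~ beval v a || beval v b
  | Box a => v (Box a)
  end.
Definition tautology (a : form) : Prop := forall v, beval v a = true.

Record normal_logic (L : form -> Prop) : Prop := {
  nl_taut : forall a, tautology a -> L a;
  nl_K : L (Imp (Box (Imp (Var 0) (Var 1))) (Imp (Box (Var 0)) (Box (Var 1))));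
  nl_MP : forall a b, L a -> L (Imp a b) -> L b;
  nl_Nec : forall a, L a -> L (Box a);
  nl_subst : forall s a, L a -> L (subst s a)
}.

Inductive gderiv (L : form -> Prop) (G : form -> Prop) : form -> Prop :=
| gd_logic : forall a, L a -> gderiv L G a
| gd_hyp : forall a, G a -> gderiv L G a
| gd_MP : forall a b, gderiv L G a -> gderiv L G (Imp a b) -> gderiv L G b
| gd_Nec : forall a, gderiv L G a -> gderiv L G (Box a).

Fixpoint ksat (W : Type) (R : W -> W -> Prop) (V : nat -> W -> Prop)
    (w : W) (a : form) : Prop :=
  match a with
  | Var n => V n w
  | Bot => False
  | Imp a b => ksat R V w a -> ksat R V w b
  | Box a => forall u, R w u -> ksat R V u a
  end.

Definition kmodel_true (W : Type) (R : W -> W -> Prop) (V : nat -> W -> Prop)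
  (a : form) : Prop := forall w, ksat R V w a.

Definition frame_for (L : form -> Prop) (W : Type) (R : W -> W -> Prop) : Prop :=
  forall a, L a -> forall V, kmodel_true R V a.

Definition strongly_kripke_complete (L : form -> Prop) : Prop :=
  forall (G : form -> Prop) (a : form), ~ gderiv L G a ->
    exists (W : Type) (R : W -> W -> Prop) (V : nat -> W -> Prop),
      frame_for L R /\ (forall g, G g -> kmodel_true R V g) /\ ~ kmodel_true R V a.

Definition n_transitive (L : form -> Prop) (n : nat) : Prop :=
  gderiv L (fun _ => False) (Imp (Boxdot_n n (Var 0)) (Boxdot_n n.+1 (Var 0))).
Definition weakly_transitive (L : form -> Prop) : Prop :=
  exists n : nat, n_transitive L n.

Record modalAlgebra := ModalAlgebra {
  ma_disp : Order.disp_t;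
  ma_car :> ctbDistrLatticeType ma_disp;
  ma_box : ma_car -> ma_car;
  ma_box_top : ma_box Order.top = Order.top;
  ma_box_meet : forall x y : ma_car,
    ma_box (Order.meet x y) = Order.meet (ma_box x) (ma_box y)
}.

Fixpoint aeval (A : modalAlgebra) (v : nat -> A) (a : form) : A :=
  match a with
  | Var n => v n
  | Bot => Order.bottom
  | Imp a b => Order.join (Order.compl (aeval v a)) (aeval v b)
  | Box a => ma_box (aeval v a)
  end.

Definition in_variety (L : form -> Prop) (A : modalAlgebra) : Prop :=
  forall a, L a -> forall v : nat -> A, aeval v a = Order.top.

Inductive gen (A : modalAlgebra) (X : A -> Prop) : A -> Prop :=
| gen_base : forall x, X x -> gen X x
| gen_bot : gen X Order.bottom
| gen_top : gen X Order.top
| gen_meet : forall x y, gen X x -> gen X y -> gen X (Order.meet x y)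
| gen_join : forall x y, gen X x -> gen X y -> gen X (Order.join x y)
| gen_compl : forall x, gen X x -> gen X (Order.compl x)
| gen_box : forall x, gen X x -> gen X (ma_box x).

Definition hom_on (A B : modalAlgebra) (P : A -> Prop) (f : A -> B) : Prop :=
  f Order.bottom = Order.bottom /\ f Order.top = Order.top /\
  (forall x y, P x -> P y -> f (Order.meet x y) = Order.meet (f x) (f y)) /\
  (forall x y, P x -> P y -> f (Order.join x y) = Order.join (f x) (f y)) /\
  (forall x, P x -> f (Order.compl x) = Order.compl (f x)) /\
  (forall x, P x -> f (ma_box x) = ma_box (f x)).

(** The subalgebra of A with carrier P is finitely presented in V_L:
    it is generated by g 0, ..., g (n-1) and, for a finite set E of equations
    in the variables x_0..x_(n-1) satisfied by g, it has the universal property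
    of the presentation < x_0..x_(n-1) | E > in V_L. *)
Definition fin_presented_sub (L : form -> Prop) (A : modalAlgebra)
    (P : A -> Prop) : Prop :=
  exists (n : nat) (g : nat -> A) (E : seq (form * form)),
    (forall x, P x <-> gen (fun y => exists2 i, (i < n)%N & y = g i) x) /\
    (forall e, List.In e E -> vars_lt n e.1 && vars_lt n e.2) /\
    (forall e, List.In e E -> aeval g e.1 = aeval g e.2) /\
    (forall (B : modalAlgebra) (b : nat -> B), in_variety L B ->
       (forall e, List.In e E -> aeval b e.1 = aeval b e.2) ->
       exists f : A -> B, hom_on P f /\ forall i, (i < n)%N -> f (g i) = b i).

Definition fin_presented (L : form -> Prop) (A : modalAlgebra) : Prop :=
  fin_presented_sub L (fun _ : A => True).

Definition coherent (L : form -> Prop) : Prop :=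
  forall A : modalAlgebra, in_variety L A -> fin_presented L A ->
    forall gs : seq A, fin_presented_sub L (gen (fun x => x \in gs)).

From HB Require Import structures.
From mathcomp Require Import all_boot all_order generic_quotient.
From Stdlib Require Import Classical ClassicalEpsilon.
From Stdlib Require List.
Set Implicit Arguments.
Unset Strict Implicit.
Unset Printing Implicit Defensive.
Import Order.Theory.
Local Open Scope quotient_scope.

(* Let x, y, z be Var 0, Var 1, Var 2, and let Γ say that z is a □-closed set
   between x and y: x → z, z → □z, z → y.  The Lindenbaum algebra of Γ is finitely
   presented, so by coherence its subalgebra generated by x and y is finitely
   presented as well; translating a presentation back into formulas shows that the
   x,y-consequences of Γ are axiomatized by finitely many x,y-formulas Φ.
   By strong Kripke completeness, every x,y-consequence of Γ already follows from
   the formulas x → ⊡^k y (k ∈ ℕ): in a countermodel, interpret z as the set of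
   worlds reachable from x-worlds.  By compactness Φ, hence x → ⊡^(N+1) y, follows
   from x → ⊡^N y for some N, and substituting ⊡^N x for x and x for y yields
   N-transitivity. *)

Fixpoint form_enc (a : form) : GenTree.tree nat :=
  match a with
  | Var n => GenTree.Leaf n
  | Bot => GenTree.Node 0 [::]
  | Imp a b => GenTree.Node 1 [:: form_enc a; form_enc b]
  | Box a => GenTree.Node 2 [:: form_enc a]
  end.

Fixpoint form_dec (t : GenTree.tree nat) : option form :=
  match t with
  | GenTree.Leaf n => Some (Var n)
  | GenTree.Node 0 [::] => Some Bot
  | GenTree.Node 1 [:: t1; t2] =>
      if (form_dec t1, form_dec t2) is (Some a, Some b) then Some (Imp a b) else None
  | GenTree.Node 2 [:: t1] => omap Box (form_dec t1)
  | _ => None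
  end.

Lemma form_encK : pcancel form_enc form_dec.
Proof. by elim=> //= [a -> b ->|a ->]. Qed.

(* The quotient by provable equivalence below needs a choiceType structure on formulas. *)
HB.instance Definition _ := Countable.copy form (pcan_type form_encK).

Lemma In_mem (T : eqType) (x : T) (s : seq T) : List.In x s <-> x \in s.
Proof.
elim: s => //= y s IH; rewrite in_cons.
by split=> [[->|/IH->]|/orP[/eqP->|/IH]]; rewrite ?eqxx ?orbT; auto.
Qed.

Lemma fin_choice (T : Type) (x0 : T) (P : nat -> T -> Prop) n :
  (forall i, i < n -> exists x, P i x) -> exists f, forall i, i < n -> P i (f i).
Proof.
elim: n => [|n IH] h; first by exists (fun _ => x0).
have [f hf] := IH (fun i hi => h i (ltnW hi)).
have [x hx] := h n (ltnSn n).
exists (fun i => if i == n then x else f i) => i; rewrite ltnS leq_eqVlt.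
by case: eqP => [->|_] //= /hf.
Qed.

Definition Iff (a b : form) : form := And (Imp a b) (Imp b a).

Lemma subst_comp r s a : subst r (subst s a) = subst (fun i => subst r (s i)) a.
Proof. by elim: a => //= [a -> b ->|a ->]. Qed.

Lemma subst_Var a : subst Var a = a.
Proof. by elim: a => //= [a -> b ->|a ->]. Qed.

Lemma eq_subst_vars n s s' a : vars_lt n a -> (forall i, i < n -> s i = s' i) ->
  subst s a = subst s' a.
Proof.
move=> + hs; elim: a => [i /= /hs|//|a IHa b IHb /= /andP[/IHa-> /IHb->]|a IHa /= /IHa->] //.
Qed.

Lemma vars_subst m n s a : vars_lt m a -> (forall i, i < m -> vars_lt n (s i)) ->
  vars_lt n (subst s a).
Proof.
move=> + hs; elim: a => [i /= /hs|//|a IHa b IHb /= /andP[/IHa-> /IHb->]|a IHa /= /IHa] //.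
Qed.

Lemma vars_ltW m n a : m <= n -> vars_lt m a -> vars_lt n a.
Proof.
move=> le_mn.
by elim: a => [i /= /leq_trans->|//|a IHa b IHb /= /andP[/IHa-> /IHb->]|a IHa /= /IHa].
Qed.

Lemma vars_Boxdot_n n k a : vars_lt n (Boxdot_n k a) = vars_lt n a.
Proof. by elim: k => //= k ->; rewrite !andbT andbb. Qed.

Lemma subst_Boxdot_n s k a : subst s (Boxdot_n k a) = Boxdot_n k (subst s a).
Proof. by elim: k => //= k ->. Qed.

(* Sending the variables beyond k to ⊥ makes the Lindenbaum algebra of premises in
   k variables generated by the classes of those variables. *)
Definition trunc (k i : nat) : form := if i < k then Var i else Bot.

Lemma vars_subst_trunc k a : vars_lt k (subst (trunc k) a).
Proof. by elim: a => //= [i|a -> b ->] //; rewrite /trunc; case: ifP. Qed.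

Lemma subst_trunc_id k a : vars_lt k a -> subst (trunc k) a = a.
Proof.
by move=> ha; rewrite -[RHS]subst_Var; apply: eq_subst_vars ha _ => i hi; rewrite /trunc hi.
Qed.

(** * Theories and their Lindenbaum algebras *)

Ltac taut := let v := fresh "v" in move=> v /=;
  repeat match goal with |- context [beval v ?x] => case: (beval v x) end;
  repeat match goal with |- context [v ?x] => case: (v x) end; by [].

Lemma beval_subst v r a :
  beval v (subst r a) =
  beval (fun b => match b with
                  | Var i => beval v (r i)
                  | Box b => v (Box (subst r b))
                  | _ => false end) a.
Proof. by elim: a => //= a -> b ->. Qed.

Lemma tautology_subst r a : tautology a -> tautology (subst r a).
Proof. by move=> h v; rewrite beval_subst. Qed.

Record theory := Theory {
  theory_mem :> form -> Prop;
  theory_taut : forall a, tautology a -> theory_mem a;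
  theory_MP : forall a b, theory_mem a -> theory_mem (Imp a b) -> theory_mem b;
  theory_Nec : forall a, theory_mem a -> theory_mem (Box a);
  theory_K : forall a b, theory_mem (Imp (Box (Imp a b)) (Imp (Box a) (Box b)))
}.
Arguments theory_taut {t a}.
Arguments theory_K {t}.

Section TheoryFacts.
Variable T : theory.

Lemma theory_taut1 a b : tautology (Imp a b) -> T a -> T b.
Proof. by move=> h ha; apply: theory_MP ha (theory_taut h). Qed.

Lemma theory_taut2 a b c : tautology (Imp a (Imp b c)) -> T a -> T b -> T c.
Proof. by move=> h ha hb; apply: theory_MP hb (theory_MP ha (theory_taut h)). Qed.

Lemma theory_box_mono a b : T (Imp a b) -> T (Imp (Box a) (Box b)).
Proof. by move=> h; apply: theory_MP (theory_Nec h) (theory_K a b). Qed.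

Definition eqv a b := T (Iff a b).

Lemma eqv_refl a : eqv a a. Proof. by apply: theory_taut; taut. Qed.
Lemma eqv_sym a b : eqv a b -> eqv b a. Proof. by apply: theory_taut1; taut. Qed.
Lemma eqv_trans a b c : eqv a b -> eqv b c -> eqv a c.
Proof. by apply: theory_taut2; taut. Qed.

Lemma eqv_Imp a a' b b' : eqv a a' -> eqv b b' -> eqv (Imp a b) (Imp a' b').
Proof. by apply: theory_taut2; taut. Qed.

Lemma eqv_Neg a a' : eqv a a' -> eqv (Neg a) (Neg a').
Proof. by move=> h; apply: eqv_Imp h (eqv_refl _). Qed.

Lemma eqv_And a a' b b' : eqv a a' -> eqv b b' -> eqv (And a b) (And a' b').
Proof. by move=> h1 h2; apply/eqv_Neg/eqv_Imp/eqv_Neg. Qed.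

Lemma eqv_Or a a' b b' : eqv a a' -> eqv b b' -> eqv (Or a b) (Or a' b').
Proof. by move=> h1 h2; apply/eqv_Imp/h2/eqv_Neg. Qed.

Lemma eqv_Box a a' : eqv a a' -> eqv (Box a) (Box a').
Proof.
move=> h.
have h1 : T (Imp a a') by apply: theory_taut1 h; taut.
have h2 : T (Imp a' a) by apply: theory_taut1 h; taut.
by apply: theory_taut2 (theory_box_mono h1) (theory_box_mono h2); taut.
Qed.

(* [eq_quot] quotients by a boolean relation, so provable equivalence is decided
   classically. *)
Definition eqvb a b : bool := if excluded_middle_informative (eqv a b) then true else false.

Lemma eqvbP a b : reflect (eqv a b) (eqvb a b).
Proof. by rewrite /eqvb; case: excluded_middle_informative => h; constructor. Qed.

Lemma eqvb_equiv : equiv_class_of eqvb.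
Proof.
split=> [a|a b|b a c /eqvbP hab /eqvbP hbc]; first exact/eqvbP/eqv_refl.
- by apply/eqvbP/eqvbP => /eqv_sym.
- exact/eqvbP/(eqv_trans hab hbc).
Qed.

Definition eqv_rel := EquivRelPack eqvb_equiv.
End TheoryFacts.

Section Logic.
Variable L : form -> Prop.
Hypothesis hL : normal_logic L.

Lemma gderiv_K G a b : gderiv L G (Imp (Box (Imp a b)) (Imp (Box a) (Box b))).
Proof. exact/gd_logic/(nl_subst hL (fun i => if i is 0 then a else b) (nl_K hL)). Qed.

Definition gthy (G : form -> Prop) : theory :=
  Theory (fun a ha => gd_logic G (nl_taut hL ha)) (@gd_MP L G) (@gd_Nec L G) (@gderiv_K G).

Lemma gderiv_cut G G' a :
  gderiv L G a -> (forall c, G c -> gderiv L G' c) -> gderiv L G' a.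
Proof.
move=> + hG; elim=> {a} [a /gd_logic|a /hG|a b _ ha _ hab|a _ ha] //.
- exact: gd_MP ha hab.
- exact: gd_Nec.
Qed.

Lemma gderiv_subst G s a : gderiv L G a ->
  gderiv L (fun c => exists2 b, G b & c = subst s b) (subst s a).
Proof.
elim=> {a} [a ha|a ha|a b _ ha _ hab|a _ ha].
- exact/gd_logic/(nl_subst hL).
- by apply: gd_hyp; exists a.
- exact: gd_MP ha hab.
- exact: gd_Nec.
Qed.
End Logic.

Definition subst_theory (T : theory) (r : nat -> form) : theory :=
  @Theory (fun a => T (subst r a)) (fun a ha => @theory_taut T _ (tautology_subst r ha))
    (fun a b => @theory_MP T (subst r a) (subst r b)) (fun a => @theory_Nec T (subst r a))
    (fun a b => @theory_K T (subst r a) (subst r b)).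

Definition Lind (T : theory) := {eq_quot (eqv_rel T)}.
HB.instance Definition _ T := Choice.on (Lind T).
HB.instance Definition _ T := Quotient.on (Lind T).

Definition cls T (a : form) : Lind T := \pi_(Lind T) a.

Lemma clsP T a b : cls T a = cls T b <-> eqv T a b.
Proof. by split=> [/eqmodP/eqvbP|h]; [|apply/eqmodP/eqvbP]. Qed.

Section LindenbaumOps.
Variable T : theory.
Local Notation cl := (cls T).

Lemma reprE a : eqv T (repr (cl a)) a.
Proof. by apply/clsP; rewrite /cls reprK. Qed.

Lemma clsK (x : Lind T) : cl (repr x) = x.
Proof. exact: reprK. Qed.

Lemma clsW (P : Lind T -> Prop) : (forall a, P (cl a)) -> forall x, P x.
Proof. by move=> h x; rewrite -(clsK x). Qed.

Definition meetQ (x y : Lind T) := cl (And (repr x) (repr y)).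
Definition joinQ (x y : Lind T) := cl (Or (repr x) (repr y)).
Definition complQ (x : Lind T) := cl (Neg (repr x)).
Definition boxQ (x : Lind T) := cl (Box (repr x)).
Definition topQ := cl Top.
Definition botQ := cl Bot.

Lemma meetQE a b : meetQ (cl a) (cl b) = cl (And a b).
Proof. by apply/clsP/eqv_And; apply: reprE. Qed.
Lemma joinQE a b : joinQ (cl a) (cl b) = cl (Or a b).
Proof. by apply/clsP/eqv_Or; apply: reprE. Qed.
Lemma complQE a : complQ (cl a) = cl (Neg a).
Proof. by apply/clsP/eqv_Neg; apply: reprE. Qed.
Lemma boxQE a : boxQ (cl a) = cl (Box a).
Proof. by apply/clsP/eqv_Box; apply: reprE. Qed.

Lemma clsT a : cl a = topQ <-> T a.
Proof. by rewrite clsP; split; apply: theory_taut1; taut. Qed.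

Ltac qsolve :=
  rewrite ?(meetQE, joinQE, complQE, boxQE); apply/clsP; apply: theory_taut; taut.

Lemma meetQC : commutative meetQ.
Proof. by elim/clsW=> a; elim/clsW=> b; qsolve. Qed.
Lemma joinQC : commutative joinQ.
Proof. by elim/clsW=> a; elim/clsW=> b; qsolve. Qed.
Lemma meetQA : associative meetQ.
Proof. by elim/clsW=> a; elim/clsW=> b; elim/clsW=> c; qsolve. Qed.
Lemma joinQA : associative joinQ.
Proof. by elim/clsW=> a; elim/clsW=> b; elim/clsW=> c; qsolve. Qed.
Lemma joinQKI y x : meetQ x (joinQ x y) = x.
Proof. by elim/clsW: x => a; elim/clsW: y => b; qsolve. Qed.
Lemma meetQKU y x : joinQ x (meetQ x y) = x.
Proof. by elim/clsW: x => a; elim/clsW: y => b; qsolve. Qed.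
Lemma meetQUl : left_distributive meetQ joinQ.
Proof. by elim/clsW=> a; elim/clsW=> b; elim/clsW=> c; qsolve. Qed.
Lemma meetQxx : idempotent_op meetQ.
Proof. by elim/clsW=> a; qsolve. Qed.
Lemma meetQ0x x : meetQ botQ x = botQ.
Proof. by elim/clsW: x => a; qsolve. Qed.
Lemma meetQx1 x : meetQ x topQ = x.
Proof. by elim/clsW: x => a; qsolve. Qed.
Lemma joinQxC x : joinQ x (complQ x) = topQ.
Proof. by elim/clsW: x => a; qsolve. Qed.
Lemma meetQxC x : meetQ x (complQ x) = botQ.
Proof. by elim/clsW: x => a; qsolve. Qed.

Lemma boxQ1 : boxQ topQ = topQ.
Proof. by rewrite boxQE; apply/clsT/theory_Nec/theory_taut; taut. Qed.

Lemma boxQI x y : boxQ (meetQ x y) = meetQ (boxQ x) (boxQ y).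
Proof.
elim/clsW: x => a; elim/clsW: y => b; rewrite !(meetQE, boxQE); apply/clsP.
have boxI_l : T (Imp (Box (And a b)) (Box a)) by apply/theory_box_mono/theory_taut; taut.
have boxI_r : T (Imp (Box (And a b)) (Box b)) by apply/theory_box_mono/theory_taut; taut.
have box_pair : T (Imp (Box a) (Box (Imp b (And a b)))).
  by apply/theory_box_mono/theory_taut; taut.
have boxI : T (Imp (Box a) (Imp (Box b) (Box (And a b)))).
  by apply: theory_taut2 box_pair (theory_K b (And a b)); taut.
have boxI_lr : T (Imp (Box (And a b)) (And (Box a) (Box b))).
  by apply: theory_taut2 boxI_l boxI_r; taut.
by apply: theory_taut2 boxI_lr boxI; taut.
Qed.

Definition leQ (x y : Lind T) := meetQ x y == x.
Definition ltQ (x y : Lind T) := (y != x) && leQ x y.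
End LindenbaumOps.

HB.instance Definition _ T := Order.isMeetJoinDistrLattice.Build (Order.Disp tt tt)
  (Lind T) (fun x y => erefl (leQ x y)) (fun x y => erefl (ltQ x y))
  (@meetQC T) (@joinQC T) (@meetQA T) (@joinQA T) (@joinQKI T) (@meetQKU T)
  (@meetQUl T) (@meetQxx T).
HB.instance Definition _ T :=
  Order.hasBottom.Build _ (Lind T) (fun x => introT eqP (@meetQ0x T x)).
HB.instance Definition _ T :=
  Order.hasTop.Build _ (Lind T) (fun x => introT eqP (@meetQx1 T x)).
HB.instance Definition _ T :=
  Order.TBDistrLattice_hasComplement.Build _ (Lind T) (@joinQxC T) (@meetQxC T).

Definition LindMA (T : theory) : modalAlgebra :=
  @ModalAlgebra _ (Lind T) (@boxQ T) (@boxQ1 T) (@boxQI T).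

(** * Modal algebras *)

Section ModalAlgebraFacts.
Variable A : modalAlgebra.
Implicit Types v w : nat -> A.

Lemma eq_aeval v w a : (forall i, v i = w i) -> aeval v a = aeval w a.
Proof. by move=> h; elim: a => [i|//|a /= -> b ->|a /= ->] //; apply: h. Qed.

Lemma eq_aeval_vars n v w a : vars_lt n a -> (forall i, i < n -> v i = w i) ->
  aeval v a = aeval w a.
Proof.
move=> + h; elim: a => [i /= /h|//|a IHa b IHb /= /andP[/IHa-> /IHb->]|a IHa /= /IHa->] //.
Qed.

Lemma aeval_subst v s a : aeval v (subst s a) = aeval (fun i => aeval v (s i)) a.
Proof. by elim: a => //= [a -> b ->|a ->]. Qed.

Lemma aeval_Top v : aeval v Top = Order.top.
Proof. by rewrite /= joinx0 compl0. Qed.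

Lemma aeval_Neg v a : aeval v (Neg a) = Order.compl (aeval v a).
Proof. by rewrite /= joinx0. Qed.

Lemma aeval_And v a b : aeval v (And a b) = Order.meet (aeval v a) (aeval v b).
Proof. by rewrite /= !joinx0 complU !complK. Qed.

Lemma aeval_Or v a b : aeval v (Or a b) = Order.join (aeval v a) (aeval v b).
Proof. by rewrite /= !joinx0 complK. Qed.

Lemma compl_join_eq1 (x y : A) : Order.join (Order.compl x) y = Order.top -> (x <= y)%O.
Proof.
move=> h; apply/meet_idPl.
have : Order.meet x (Order.join (Order.compl x) y) = x by rewrite h meetx1.
by rewrite meetUr meetxC join0x.
Qed.

Lemma aeval_Iff v a b : aeval v (Iff a b) = Order.top -> aeval v a = aeval v b.
Proof.
rewrite aeval_And => /eqP; rewrite meet_eq1 => /andP[/eqP hab /eqP hba].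
by apply/le_anti; rewrite !compl_join_eq1.
Qed.

Lemma aeval_sound L G v a : in_variety L A -> (forall c, G c -> aeval v c = Order.top) ->
  gderiv L G a -> aeval v a = Order.top.
Proof.
move=> hA hG; elim=> {a} [a /hA|a /hG|a b _ ha _ /=|a _ /= ->] //.
- by rewrite ha compl1 join0x.
- exact: ma_box_top.
Qed.

Definition genset n (g : nat -> A) := gen (fun x => exists2 i, i < n & x = g i).

Lemma gen_sub (X Y : A -> Prop) : (forall x, X x -> Y x) -> forall x, gen X x -> gen Y x.
Proof.
move=> hXY x; elim=> {x} [y /hXY/gen_base //|||*|*|*|*]; by [apply: gen_bot|apply: gen_top
  |apply: gen_meet|apply: gen_join|apply: gen_compl|apply: gen_box].
Qed.

Lemma aeval_gen n g a : vars_lt n a -> genset n g (aeval g a).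
Proof.
elim: a => [i hi|_|a IHa b IHb /andP[/IHa ha /IHb hb]|a IHa /IHa ha] /=.
- by apply: gen_base; exists i.
- exact: gen_bot.
- exact/gen_join/hb/gen_compl.
- exact: gen_box.
Qed.

Lemma gen_aeval n g x : genset n g x -> exists a, vars_lt n a /\ x = aeval g a.
Proof.
elim=> {x} [x [i hi ->]|||x y _ [a [ha ->]] _ [b [hb ->]]|x y _ [a [ha ->]] _ [b [hb ->]]
  |x _ [a [ha ->]]|x _ [a [ha ->]]].
- by exists (Var i).
- by exists Bot.
- by exists Top; rewrite aeval_Top.
- by exists (And a b); rewrite aeval_And /= ha hb.
- by exists (Or a b); rewrite aeval_Or /= ha hb.
- by exists (Neg a); rewrite aeval_Neg /= ha.
- by exists (Box a).
Qed.

Lemma hom_aeval (B : modalAlgebra) (S : A -> Prop) (f : A -> B) n g a :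
  hom_on S f -> (forall x, S x <-> genset n g x) -> vars_lt n a ->
  f (aeval g a) = aeval (fun i => f (g i)) a.
Proof.
move=> [f0 [_ [_ [fU [fC fB]]]]] hS.
have inS b : vars_lt n b -> S (aeval g b) by move=> /(aeval_gen g)/hS.
elim: a => [//|//|a IHa b IHb /= /andP[ha hb]|a IHa /= ha].
- have [Sa Sb] := (inS _ ha, inS _ hb).
  rewrite fU ?fC ?IHa ?IHb //.
  by apply/hS; apply: gen_compl; apply/hS.
- by rewrite fB ?IHa //; apply: inS.
Qed.
End ModalAlgebraFacts.

Section LindenbaumAlgebra.
Variable T : theory.
Local Notation cl := (cls T).

Lemma aeval_cls s a : @aeval (LindMA T) (fun i => cl (s i)) a = cl (subst s a).
Proof.
elim: a => [//|//|a IHa b IHb|a IHa] /=; last by rewrite IHa; apply: boxQE.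
rewrite IHa IHb.
change (joinQ (complQ (cl (subst s a))) (cl (subst s b)) = cl (Imp (subst s a) (subst s b))).
by rewrite complQE joinQE; apply/clsP/theory_taut; taut.
Qed.

Lemma cls_aeval a : cl a = @aeval (LindMA T) (fun i => cl (Var i)) a.
Proof. by rewrite aeval_cls subst_Var. Qed.

Lemma lind_variety L : (forall s a, L a -> T (subst s a)) -> in_variety L (LindMA T).
Proof.
move=> hT a ha v.
rewrite (@eq_aeval (LindMA T) _ (fun i => cl (repr (v i)))) => [|i]; last by rewrite clsK.
by rewrite aeval_cls; apply/clsT/hT.
Qed.

Lemma lind_hom (B : modalAlgebra) (b : nat -> B) (r : nat -> form) (f : LindMA T -> B) :
  (forall a, f (cl a) = aeval b (subst r a)) -> hom_on (fun _ => True) f.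
Proof.
move=> fE; split; [|split; [|split; [|split; [|split]]]].
- exact: (fE Bot).
- by rewrite [Order.top](_ : _ = cl Top) // fE aeval_Top.
- elim/clsW=> a; elim/clsW=> c _ _.
  by rewrite [Order.meet _ _](meetQE T a c) !fE aeval_And.
- elim/clsW=> a; elim/clsW=> c _ _.
  by rewrite [Order.join _ _](joinQE T a c) !fE aeval_Or.
- elim/clsW=> a _.
  by rewrite [Order.compl _](complQE T a) !fE aeval_Neg.
- elim/clsW=> a _.
  by rewrite [ma_box _](boxQE T a) !fE.
Qed.

Definition var_classes m : seq (LindMA T) := [seq cl (Var i) | i <- iota 0 m].

Lemma gen_var_classes m x : gen (fun y => y \in var_classes m) x ->
  exists a, vars_lt m a /\ x = cl a.
Proof.
move=> hx; have : genset m (fun i => cl (Var i) : LindMA T) x.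
  by apply: gen_sub hx => y /mapP[i]; rewrite mem_iota => /andP[_ hi] ->; exists i.
by move=> /gen_aeval[a [ha ->]]; exists a; rewrite -cls_aeval.
Qed.
End LindenbaumAlgebra.

(** * Coherence and finite axiomatizability *)

Lemma gthy_variety L (hL : normal_logic L) G : in_variety L (LindMA (gthy hL G)).
Proof. by apply: lind_variety => s a ha; apply/gd_logic/(nl_subst hL). Qed.

Section FinitePremises.
Variables (L : form -> Prop) (hL : normal_logic L) (Gs : seq form) (k : nat).
Hypothesis Gs_vars : all (vars_lt k) Gs.

Definition trunc_theory : theory := subst_theory (gthy hL (fun c => c \in Gs)) (trunc k).
Local Notation T := trunc_theory.

Lemma trunc_theoryE a : vars_lt k a -> T a <-> gderiv L (fun c => c \in Gs) a.
Proof. by move=> ha; rewrite /= subst_trunc_id. Qed.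

Lemma cls_subst_trunc a : cls T (subst (trunc k) a) = cls T a.
Proof.
apply/clsP; have := eqv_refl T a; rewrite /eqv /=.
by rewrite (subst_trunc_id (vars_subst_trunc k a)).
Qed.

Lemma trunc_variety : in_variety L (LindMA T).
Proof.
by apply: lind_variety => s a ha; rewrite /= subst_comp; apply/gd_logic/(nl_subst hL).
Qed.

Lemma trunc_fin_presented : fin_presented L (LindMA T).
Proof.
exists k, (fun i => cls T (Var i)), [seq (c, Top) | c <- Gs].
have E_Gs e : List.In e [seq (c, Top) | c <- Gs] -> exists2 c, c \in Gs & e = (c, Top).
  by move=> /In_mem/mapP.
split; [|split; [|split]].
- move=> x; split=> // _; rewrite -(clsK x) -cls_subst_trunc cls_aeval.
  exact/aeval_gen/vars_subst_trunc.
- by move=> e /E_Gs[c /(allP Gs_vars) hc ->]; rewrite /= hc.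
- move=> e /E_Gs[c hc ->]; rewrite aeval_Top -cls_aeval.
  by apply/clsT/(trunc_theoryE (allP Gs_vars c hc)); apply: gd_hyp.
- move=> B b hB hE.
  have b_Gs c : c \in Gs -> aeval b c = Order.top.
    by move=> hc; rewrite -(aeval_Top b); apply: (hE (c, Top)); apply/In_mem/map_f.
  pose f (x : Lind T) := aeval b (subst (trunc k) (repr x)).
  have fE a : f (cls T a) = aeval b (subst (trunc k) a).
    by apply: aeval_Iff; apply: aeval_sound hB b_Gs _; exact: (reprE T a).
  exists f; split; first exact: lind_hom fE.
  by move=> i hi; rewrite fE /= /trunc hi.
Qed.

Variable m : nat.
Hypothesis le_mk : m <= k.
Local Notation S := (gen (fun x => x \in var_classes T m)).

Lemma cls_eq_derivable a c : vars_lt m a -> vars_lt m c -> cls T a = cls T c ->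
  vars_lt m (Iff a c) /\ gderiv L (fun d => d \in Gs) (Iff a c).
Proof.
move=> ha hc; have hv : vars_lt m (Iff a c) by rewrite /= ha hc.
by move=> /clsP /(trunc_theoryE (vars_ltW le_mk hv)).
Qed.

Section Presentation.
Variables (n : nat) (g : nat -> LindMA T) (E : seq (form * form)) (tau s : nat -> form).
Hypothesis gen_g : forall x, S x <-> genset n g x.
Hypothesis E_vars : forall e, List.In e E -> vars_lt n e.1 && vars_lt n e.2.
Hypothesis E_sat : forall e, List.In e E -> aeval g e.1 = aeval g e.2.
Hypothesis E_univ : forall (B : modalAlgebra) (b : nat -> B), in_variety L B ->
  (forall e, List.In e E -> aeval b e.1 = aeval b e.2) ->
  exists f : LindMA T -> B, hom_on S f /\ forall i, i < n -> f (g i) = b i.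
Hypothesis tau_g : forall i, i < n -> vars_lt m (tau i) /\ g i = cls T (tau i).
Hypothesis s_var : forall j, j < m -> vars_lt n (s j) /\ cls T (Var j) = aeval g (s j).

(* [tau i] names the generator [g i] by an m-variable formula and [s j] expresses the
   variable class [cls T (Var j)] through the generators; the universal property of
   the presentation then carries every m-variable consequence of [Gs] into the
   Lindenbaum algebra of these axioms. *)
Definition fragment_axioms : seq form :=
  [seq Iff (Var j) (subst tau (s j)) | j <- iota 0 m] ++
  [seq Iff (subst tau e.1) (subst tau e.2) | e <- E].

Lemma aeval_generators a : vars_lt n a -> aeval g a = cls T (subst tau a).
Proof. by move=> ha; rewrite -aeval_cls; apply: eq_aeval_vars ha _ => i /tau_g[]. Qed.

Lemma fragment_axioms_sound c : c \in fragment_axioms ->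
  vars_lt m c /\ gderiv L (fun d => d \in Gs) c.
Proof.
have vars_tau a : vars_lt n a -> vars_lt m (subst tau a).
  by move=> ha; apply: vars_subst ha _ => i /tau_g[].
rewrite mem_cat => /orP[/mapP[j] | /mapP[e /In_mem he ->]].
- rewrite mem_iota => /andP[_ hj] ->; have [hs sE] := s_var hj.
  by apply: cls_eq_derivable; rewrite ?vars_tau // sE aeval_generators.
- have /andP[h1 h2] := E_vars he.
  by apply: cls_eq_derivable; rewrite ?vars_tau // -!aeval_generators ?E_sat.
Qed.

Lemma fragment_axioms_complete a : vars_lt m a -> gderiv L (fun d => d \in Gs) a ->
  gderiv L (fun d => d \in fragment_axioms) a.
Proof.
move=> ha hGa.
pose TF := gthy hL (fun d => d \in fragment_axioms).
have axiom_eq b c : Iff b c \in fragment_axioms -> cls TF b = cls TF c.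
  by move=> hbc; apply/clsP/gd_hyp.
have [f [hom_f f_g]] : exists f : LindMA T -> LindMA TF,
    hom_on S f /\ forall i, i < n -> f (g i) = cls TF (tau i).
  apply: (@E_univ (LindMA TF) (fun i => cls TF (tau i)) (@gthy_variety L hL _)) => e he.
  rewrite !aeval_cls; apply: axiom_eq.
  by rewrite mem_cat; apply/orP; right; apply/mapP; exists e => //; apply/In_mem.
have vars_sa : vars_lt n (subst s a) by apply: vars_subst ha _ => j /s_var[].
have top_sa : aeval g (subst s a) = Order.top.
  rewrite aeval_subst.
  rewrite -(eq_aeval_vars (A := LindMA T) (v := fun j => cls T (Var j)) ha) => [|j /s_var[]//].
  by rewrite -cls_aeval; apply/clsT/(trunc_theoryE (vars_ltW le_mk ha)).
have : f (aeval g (subst s a)) = cls TF a.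
  rewrite (hom_aeval hom_f gen_g vars_sa) (eq_aeval_vars vars_sa f_g).
  rewrite aeval_cls subst_comp -aeval_cls [RHS]cls_aeval; apply: eq_aeval_vars ha _ => j hj.
  symmetry; apply: axiom_eq; rewrite mem_cat; apply/orP; left.
  by apply/mapP; exists j; rewrite ?mem_iota.
by rewrite top_sa (proj1 (proj2 hom_f)) => /esym /clsT.
Qed.
End Presentation.

Lemma coherent_fragment_axiomatized : coherent L -> exists Phi : seq form,
  (forall c, c \in Phi -> vars_lt m c /\ gderiv L (fun d => d \in Gs) c) /\
  (forall a, vars_lt m a -> gderiv L (fun d => d \in Gs) a ->
     gderiv L (fun d => d \in Phi) a).
Proof.
move=> hC.
have [n [g [E [gen_g [E_vars [E_sat E_univ]]]]]] :=
  hC _ trunc_variety trunc_fin_presented (var_classes T m).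
have [tau tau_g] : exists tau, forall i, i < n -> vars_lt m (tau i) /\ g i = cls T (tau i).
  apply: (fin_choice Bot (P := fun i t => vars_lt m t /\ g i = cls T t)) => i hi.
  by apply: gen_var_classes; apply/gen_g/gen_base; exists i.
have [s s_var] : exists s, forall j, j < m -> vars_lt n (s j) /\ cls T (Var j) = aeval g (s j).
  apply: (fin_choice Bot (P := fun j t => vars_lt n t /\ cls T (Var j) = aeval g t)) => j hj.
  apply: (@gen_aeval (LindMA T)); apply/gen_g/gen_base.
  by apply/mapP; exists j; rewrite ?mem_iota.
exists (fragment_axioms E tau s); split.
- exact: fragment_axioms_sound E_vars E_sat tau_g s_var.
- exact: fragment_axioms_complete gen_g E_univ s_var.
Qed.
End FinitePremises.

(** * Kripke semantics and the main argument *)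

Section Kripke.
Variables (W : Type) (R : W -> W -> Prop).

Lemma kripke_sound L G V a : frame_for L R -> (forall c, G c -> kmodel_true R V c) ->
  gderiv L G a -> kmodel_true R V a.
Proof.
move=> hF hG; elim=> {a} [a ha|a /hG //|a b _ ha _ hab w|a _ ha w u _].
- exact: hF ha V.
- exact: hab (ha w).
- exact: ha.
Qed.

Lemma eq_ksat_vars n V V' a : vars_lt n a -> (forall i, i < n -> forall w, V i w <-> V' i w) ->
  forall w, ksat R V w a <-> ksat R V' w a.
Proof.
move=> + hV; elim: a => [i /= /hV //|//|a IHa b IHb /= /andP[ha hb] w|a IHa /= ha w] /=.
- by rewrite (IHa ha w) (IHb hb w).
- by split=> h u /h /(IHa ha u).
Qed.

Fixpoint rel_pow (k : nat) (w u : W) : Prop :=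
  if k is k'.+1 then exists2 v, R w v & rel_pow k' v u else w = u.

Lemma rel_powSr k w u v : rel_pow k w u -> R u v -> rel_pow k.+1 w v.
Proof.
elim: k w => [w /= -> Ruv|k IH w [x Rwx hxu] Ruv]; first by exists v.
by exists x => //; apply: IH hxu Ruv.
Qed.

Lemma ksat_And V w a b : ksat R V w (And a b) -> ksat R V w a /\ ksat R V w b.
Proof. by move=> /= h; split; apply: NNPP => hn; apply: h => ha hb. Qed.

Lemma ksat_Boxdot_n V k a w u : ksat R V w (Boxdot_n k a) -> rel_pow k w u -> ksat R V u a.
Proof.
elim: k w => [w /= ? <-|k IH w /ksat_And[_ hbox] [v Rwv hvu]] //.
exact: IH (hbox v Rwv) hvu.
Qed.
End Kripke.

(* In a Kripke model, [within n] says that every world reachable from an x-world in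
   at most n steps is a y-world; [hull] says that z is a □-closed set of worlds
   containing x and contained in y. *)
Definition within (n : nat) : form := Imp (Var 0) (Boxdot_n n (Var 1)).

Definition hull : seq form :=
  [:: Imp (Var 0) (Var 2); Imp (Var 2) (Box (Var 2)); Imp (Var 2) (Var 1)].

Lemma vars_within n : vars_lt 2 (within n).
Proof. by rewrite /= vars_Boxdot_n. Qed.

Lemma subst_within s n : subst s (within n) = Imp (s 0) (Boxdot_n n (s 1)).
Proof. by rewrite /within -(subst_Boxdot_n s n (Var 1)). Qed.

Section Within.
Variables (L : form -> Prop) (hL : normal_logic L).

Lemma hull_within n : gderiv L (fun c => c \in hull) (within n).
Proof.
pose T := gthy hL (fun c => c \in hull).
have x_z : T (Imp (Var 0) (Var 2)) by apply: gd_hyp.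
have z_box : T (Imp (Var 2) (Box (Var 2))) by apply: gd_hyp.
have z_y : T (Imp (Var 2) (Var 1)) by apply: gd_hyp.
have z_Boxdot k : T (Imp (Var 2) (Boxdot_n k (Var 1))).
  elim: k => [//|k IH] /=.
  have z_box_k : T (Imp (Var 2) (Box (Boxdot_n k (Var 1)))).
    by apply: theory_taut2 z_box (theory_box_mono IH); taut.
  by apply: theory_taut2 IH z_box_k; taut.
by apply: theory_taut2 x_z (z_Boxdot n); taut.
Qed.

Lemma hull_conservative a : strongly_kripke_complete L -> vars_lt 2 a ->
  gderiv L (fun c => c \in hull) a -> gderiv L (fun c => exists n, c = within n) a.
Proof.
move=> hS ha hull_a; apply: NNPP => /hS[W [R [V [hF [hV not_a]]]]].
pose reach w := exists w0 k, V 0 w0 /\ rel_pow R k w0 w.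
pose V' i := if i == 2 then reach else V i.
have VV' i : i < 2 -> forall u, V i u <-> V' i u.
  by rewrite /V'; case: eqP => // ->.
apply: not_a => w; apply/(eq_ksat_vars R ha VV' w).
apply: kripke_sound hF _ hull_a w => c; rewrite !inE => /or3P[] /eqP-> u /=; rewrite /V' /=.
- by move=> Vu; exists u, 0.
- move=> [w0 [k [Vw0 hk]]] v Ruv; exists w0, k.+1.
  by split=> //; apply: rel_powSr hk Ruv.
- move=> [w0 [k [Vw0 hk]]].
  exact: ksat_Boxdot_n (hV _ (ex_intro _ k erefl) w0 Vw0) hk.
Qed.

Lemma within_antitone G n N : n <= N -> gderiv L G (within N) -> gderiv L G (within n).
Proof.
move/subnK <-; elim: (N - n) => [|d IH] //= h; apply: IH.
by apply: (theory_taut1 (T := gthy hL G)) h; taut.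
Qed.

Lemma within_weaken n N a : n <= N ->
  gderiv L (eq^~ (within n)) a -> gderiv L (eq^~ (within N)) a.
Proof.
by move=> le_nN /gderiv_cut; apply=> c ->; apply: within_antitone le_nN (gd_hyp _ _).
Qed.

Lemma within_compact a : gderiv L (fun c => exists n, c = within n) a ->
  exists N, gderiv L (eq^~ (within N)) a.
Proof.
elim=> {a} [a ha|a [n ->]|a b _ [N1 h1] _ [N2 h2]|a _ [N h]].
- by exists 0; apply: gd_logic.
- by exists n; apply: gd_hyp.
- exists (maxn N1 N2); apply: gd_MP.
  + exact: within_weaken (leq_maxl _ _) h1.
  + exact: within_weaken (leq_maxr _ _) h2.
- by exists N; apply: gd_Nec.
Qed.

Lemma within_compact_seq (Phi : seq form) :
  (forall c, c \in Phi -> gderiv L (fun d => exists n, d = within n) c) ->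
  exists N, forall c, c \in Phi -> gderiv L (eq^~ (within N)) c.
Proof.
elim: Phi => [|c Phi IH] hPhi; first by exists 0.
have [N1 h1] := within_compact (hPhi c (mem_head c Phi)).
have [N2 h2] := IH (fun d hd => hPhi d (mem_behead (s := c :: Phi) hd)).
exists (maxn N1 N2) => d; rewrite inE => /orP[/eqP-> | hd].
- exact: within_weaken (leq_maxl _ _) h1.
- exact: within_weaken (leq_maxr _ _) (h2 d hd).
Qed.

(* The substitution turns the premise [within N] into a tautology. *)
Lemma n_transitive_within N : gderiv L (eq^~ (within N)) (within N.+1) -> n_transitive L N.
Proof.
move=> /(gderiv_subst hL (fun i => if i is 0 then Boxdot_n N (Var 0) else Var 0)).
rewrite subst_within => h; apply: gderiv_cut h _ => c [b -> ->].
by apply/gd_logic/(nl_taut hL); rewrite subst_within; taut.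
Qed.
End Within.

Theorem theorem4p1 (L : form -> Prop) :
  normal_logic L -> coherent L -> strongly_kripke_complete L ->
  weakly_transitive L.
Proof.
move=> hL hC hS.
have [Phi [Phi_hull Phi_axiomatizes]] :=
  coherent_fragment_axiomatized hL (erefl : all (vars_lt 3) hull) (leqnSn 2) hC.
have [N hN] : exists N, forall c, c \in Phi -> gderiv L (eq^~ (within N)) c.
  apply: (within_compact_seq hL) => c /Phi_hull[hc hull_c].
  exact: hull_conservative hS hc hull_c.
exists N; apply: (n_transitive_within hL).
exact: gderiv_cut (Phi_axiomatizes _ (vars_within _) (hull_within hL _)) hN.
Qed.
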